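(* Let $G$ be a finite connected interval graph that is balanced and $p$-critical (for some $p\ge1$), and let $z$ be the basepoint of $G$. (a) If there is at most one exterior local component at $z$, then there are at least two local components at $z$ which are cliques and have maximum order among the local components at $z$. (b) If there is no exterior local component at $z$, then there are at least three local components at $z$ which are cliques and have maximum order among the local components at $z$.
   Context: An interval graph is a finite simple graph whose vertices can be assigned (closed, bounded) real intervals $I_v$ so that $v,w$ are adjacent iff $I_v\cap I_w\ne\emptyset$. For such a representation $\alpha$, $\mathrm{imp}_\alpha(z)$ is the number of intervals $I_w$, $w\ne z$, with $I_w\subseteq I_z$; $\mathrm{imp}(\alpha)=\max_z\mathrm{imp}_\alpha(z)$; and the impropriety $\mathrm{imp}(G)$ is the minimum of $\mathrm{imp}(\alpha)$ over all representations. A local component at $z$ is a connected component of $G\setminus\{z\}$; it is exterior iff it contains a vertex not adjacent to $z$. If $z$ has $n$ local components, $\mathrm{wt}(z)$ is the sum of the $n-2$ smallest orders among the non-exterior local components at $z$ ($0$ if $n\le2$), and $\mathrm{wt}(G)=\max_z \mathrm{wt}(z)$. $G$ is balanced iff $\mathrm{wt}(G)=\mathrm{imp}(G)$. If $G$ is balanced, a basepoint of $G$ is a vertex $z$ with $\mathrm{wt}(z)=\mathrm{imp}(G)$ (a balanced $p$-critical graph has exactly one basepoint). For $p>0$, $G$ is $p$-critical iff $\mathrm{imp}(G)=p$ and every proper induced subgraph of $G$ has impropriety strictly less than $p$. *)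

From Stdlib Require Import Reals.
From mathcomp Require Import all_boot.
Set Implicit Arguments. Unset Strict Implicit. Unset Printing Implicit Defensive.

(* A finite simple graph: vertex type T : finType, symmetric irreflexive
   adjacency e.  Induced subgraphs are given by vertex sets V : {set T}. *)
Definition simple_graph (T : finType) (e : rel T) : Prop :=
  symmetric e /\ irreflexive e.

Definition Rleb (a b : R) : bool := if Rle_dec a b then true else false.

Section Graphs.
Variables (T : finType) (e : rel T).

Definition induced (V : {set T}) : rel T :=
  [rel x y | [&& x \in V, y \in V & e x y]].

Definition connected_set (V : {set T}) : Prop :=
  forall x y, x \in V -> y \in V -> connect (induced V) x y.

Definition is_rep (V : {set T}) (l r : T -> R) : Prop :=
  (forall v, v \in V -> Rle (l v) (r v)) /\
  (forall v w, v \in V -> w \in V -> v != w ->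
     (e v w <-> Rle (l v) (r w) /\ Rle (l w) (r v))).

Definition subint (l r : T -> R) (w z : T) : bool :=
  Rleb (l z) (l w) && Rleb (r w) (r z).

Definition imp_at (V : {set T}) (l r : T -> R) (z : T) : nat :=
  #|[set w in V | (w != z) && subint l r w z]|.

Definition imp_rep (V : {set T}) (l r : T -> R) : nat :=
  \max_(z in V) imp_at V l r z.

Definition interval_graph (V : {set T}) : Prop := exists l r, is_rep V l r.

Definition imp_eq (V : {set T}) (k : nat) : Prop :=
  (exists l r, is_rep V l r /\ imp_rep V l r = k) /\
  (forall l r, is_rep V l r -> k <= imp_rep V l r).

Definition p_critical (V : {set T}) (p : nat) : Prop :=
  0 < p /\ imp_eq V p /\
  (forall S : {set T}, S \proper V -> exists k, k < p /\ imp_eq S k).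

Definition comp (S : {set T}) (x : T) : {set T} :=
  [set y | connect (induced S) x y].

Definition local_comps (V : {set T}) (z : T) : {set {set T}} :=
  [set comp (V :\ z) x | x in V :\ z].

Definition exterior (z : T) (C : {set T}) : bool :=
  [exists w in C, ~~ e z w].

Definition is_clique (C : {set T}) : bool :=
  [forall x in C, forall y in C, (x != y) ==> e x y].

Definition wt (V : {set T}) (z : T) : nat :=
  let n := #|local_comps V z| in
  let orders := sort leq [seq #|C| | C : {set T} <- enum [set C in local_comps V z
                                                | ~~ exterior z C]] in
  sumn (take (n - 2) orders).

Definition wtG (V : {set T}) : nat := \max_(z in V) wt V z.

Definition balanced (V : {set T}) : Prop := imp_eq V (wtG V).

Definition basepoint (V : {set T}) (z : T) : Prop :=
  balanced V /\ z \in V /\ imp_eq V (wt V z).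

Definition max_order_comps (V : {set T}) (z : T) : nat :=
  \max_(C in local_comps V z) #|C|.

Definition max_clique_comps (V : {set T}) (z : T) : {set {set T}} :=
  [set C in local_comps V z | is_clique C && (#|C| == max_order_comps V z)].

Definition exterior_comps (V : {set T}) (z : T) : {set {set T}} :=
  [set C in local_comps V z | exterior z C].

End Graphs.

From Pilot Require Import Defs.
From Stdlib Require Import Reals Lra.
From mathcomp Require Import all_boot zify.
Set Implicit Arguments. Unset Strict Implicit. Unset Printing Implicit Defensive.

(* Let z be the basepoint, so p = imp(G) = wt(z).  The whole argument rests on
   one deletion step.  Delete a vertex v from a local component Y at z so that
   Y \ v stays connected and adjacent to z.  By criticality G - v has a
   representation with impropriety k < p, so at most k intervals lie inside
   I_z and the set N of vertices of G - v - z sticking out of I_z is large: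
   every exterior pair A, B (two components carrying all exterior ones)
   satisfies #|A| + #|B| <= #|N|, because wt(z) + #|A| + #|B| <= #|V \ z|.
   On the other hand two disjoint connected pieces of G - v - z adjacent to z
   cannot both stick out on the same side of I_z, so N lies in at most two
   pieces D1, D2; a non-clique piece sticking out on one side only even keeps
   a vertex inside I_z.  Choosing Y and v suitably, these facts produce an
   exterior pair larger than N, a contradiction, unless enough local
   components are cliques of maximum order. *)

Lemma sumn_take_sorted_subseq (s q : seq nat) :
  sorted leq s -> subseq q s -> sumn (take (size q) s) <= sumn q.
Proof.
elim: s q => [|x s IH] [|y q] //= Hs; have Ss := path_sorted Hs.
case: eqP => [-> sub | _ sub]; first by rewrite leq_add2l IH.
have /allP xle := order_path_min leq_trans Hs.
apply: leq_add; first exact/xle/(mem_subseq sub)/mem_head.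
exact/IH/(subseq_trans (subseq_cons q y)).
Qed.

Lemma sum_smallest_le (I : finType) (f : I -> nat) (X F : {set I}) :
  F \subset X -> sumn (take #|F| (sort leq [seq f C | C <- enum X])) <= \sum_(C in F) f C.
Proof.
move=> FX; set q := sort leq [seq f C | C <- enum F].
have enumF : enum F = [seq C <- enum X | C \in F].
  rewrite /enum_mem -filter_predI; apply: eq_filter => C /=.
  by apply/idP/andP => [CF | []//]; rewrite (subsetP FX).
have sub : subseq q (sort leq [seq f C | C <- enum X]).
  by apply: subseq_sort leq_total leq_trans _ _ _; rewrite enumF map_subseq ?filter_subseq.
have := sumn_take_sorted_subseq (sort_sorted leq_total _) sub.
rewrite size_sort size_map -cardE (perm_sumn (permEl (perm_sort _ _))).
by rewrite [sumn (map _ _)]sumnE big_map big_enum.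
Qed.

Lemma connect_prop (T : finType) (r : rel T) (P : pred T) x y :
  (forall a b, P a -> r a b -> P b) -> connect r x y -> P x -> P y.
Proof.
move=> H /connectP [q pq ->]; elim: q x pq => //= w q IH x /andP[rxw pq] Px.
exact: IH pq (H _ _ Px rxw).
Qed.

Section Components.
Variables (T : finType) (e : rel T).
Hypothesis e_sym : symmetric e.

Lemma induced_sym (S : {set T}) : symmetric (induced e S).
Proof. by move=> x y; rewrite /induced /= e_sym andbCA. Qed.

Lemma comp_self (S : {set T}) x : x \in Defs.comp e S x.
Proof. by rewrite inE connect0. Qed.

Lemma comp_sub (S : {set T}) x : x \in S -> Defs.comp e S x \subset S.
Proof.
move=> xS; apply/subsetP => y; rewrite inE => /connect_prop; apply=> // a b _.
by case/and3P.
Qed.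

Lemma comp_eq (S : {set T}) x y : y \in Defs.comp e S x -> Defs.comp e S y = Defs.comp e S x.
Proof.
rewrite inE => cxy; apply/setP => w; rewrite !inE; apply/idP/idP; first exact: connect_trans.
by apply: connect_trans; rewrite (sym_connect_sym (induced_sym S)).
Qed.

Lemma comp_mono (S S' : {set T}) x : S \subset S' -> Defs.comp e S x \subset Defs.comp e S' x.
Proof.
move=> SS'; apply/subsetP => w; rewrite !inE; apply: connect_sub => a b /and3P[aS bS eab].
by apply: connect1; rewrite /induced /= (subsetP SS' _ aS) (subsetP SS' _ bS).
Qed.

Lemma comp_avoid (S : {set T}) x y :
  x \notin Defs.comp e S y -> Defs.comp e S y \subset Defs.comp e (S :\ x) y.
Proof.
move=> xZ; apply/subsetP => w; rewrite !inE => cw.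
suff /andP[] : connect (induced e S) y w && connect (induced e (S :\ x)) y w by [].
apply: (connect_prop (P := fun u => connect (induced e S) y u && connect (induced e (S :\ x)) y u) _ cw).
  2: by rewrite !connect0.
move=> a b /andP[ca cxa] iab; have cb := connect_trans ca (connect1 iab); rewrite cb.
have ax : a != x by apply: contraNneq xZ => <-; rewrite inE.
have bx : b != x by apply: contraNneq xZ => <-; rewrite inE.
apply: connect_trans cxa (connect1 _).
by case/and3P: iab => aS bS eab; rewrite /induced /= !inE ax aS bx bS eab.
Qed.

Lemma comp_exit (D S : {set T}) y x :
  connected_set e D -> S \subset D -> y \in S -> x \in D -> x \notin Defs.comp e S y ->
  exists a b, [/\ a \in Defs.comp e S y, b \in D :\: S & e a b].
Proof.
move=> Dc SD yS xD xZ.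
have [/exists_inP[a aZ /exists_inP[b bDS eab]]|none] :=
  boolP [exists a in Defs.comp e S y, exists b in D :\: S, e a b]; first by exists a, b.
case/negP: xZ; apply: (connect_prop (P := fun w => w \in Defs.comp e S y) _ (Dc y x (subsetP SD y yS) xD)).
  2: exact: comp_self.
move=> a b aZ /and3P[_ bD eab]; have aS := subsetP (comp_sub yS) a aZ.
have bS : b \in S.
  apply: contraNT none => bS; apply/exists_inP; exists a => //.
  by apply/exists_inP; exists b; rewrite // inE bS bD.
rewrite inE in aZ; rewrite inE; apply: connect_trans aZ (connect1 _).
by rewrite /induced /= aS bS eab.
Qed.

(* every connected set with two vertices has a non-cut vertex other than a
   prescribed one: take v maximising the component of y0 in D \ v *)
Lemma noncut (D : {set T}) y0 :
  connected_set e D -> y0 \in D -> 1 < #|D| ->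
  exists2 v, v \in D :\ y0 & connected_set e (D :\ v).
Proof.
move=> Dc y0D D2.
have ne : 0 < #|D :\ y0| by move: D2; rewrite (cardsD1 y0 D) y0D.
have [v vD Emax] := eq_bigmax_cond (fun v => #|Defs.comp e (D :\ v) y0|) ne.
exists v => //; have [vy0 vD'] := setD1P vD.
have y0v : y0 \in D :\ v by rewrite !inE eq_sym vy0.
suff H : forall x, x \in D :\ v -> x \in Defs.comp e (D :\ v) y0.
  move=> x x' /H; rewrite inE (sym_connect_sym (induced_sym _)) => cx /H.
  by rewrite inE; apply: connect_trans.
move=> x xDv; apply/negPn/negP => nc; have [xv xD] := setD1P xDv.
set Z := Defs.comp e (D :\ v) y0 in nc.
have [a [b [aZ bDS eav]]] := comp_exit Dc (subsetDl D [set v]) y0v xD nc.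
have bv : b = v by move: bDS; rewrite !inE negb_and negbK => /andP[/orP[/eqP // | /negP]].
rewrite {b bDS}bv in eav.
have xy0 : x \in D :\ y0.
  by rewrite !inE xD andbT; apply: contraNneq nc => ->; exact: comp_self.
have ZX : Z \subset Defs.comp e (D :\ x) y0.
  apply: subset_trans (comp_avoid nc) (comp_mono _ _).
  by rewrite setDDl setUC -setDDl subsetDl.
have vX : v \in Defs.comp e (D :\ x) y0.
  have := subsetP ZX a aZ; rewrite !inE => ca; apply: connect_trans ca (connect1 _).
  have aDv := subsetP (comp_sub y0v) a aZ.
  have ax : a != x by apply: contraNneq nc => <-.
  by move: aDv; rewrite /induced /= !inE eav vD' ax (eq_sym v x) xv => /andP[_ ->].
have vZ : v \notin Z by apply/negP => /(subsetP (comp_sub y0v)); rewrite !inE eqxx.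
have := leq_bigmax_cond (F := fun i => #|Defs.comp e (D :\ i) y0|) _ xy0; rewrite Emax.
have : #|v |: Z| <= #|Defs.comp e (D :\ x) y0| by apply/subset_leq_card; rewrite subUset sub1set vX.
by rewrite cardsU1 vZ add1n => /leq_trans le /le; rewrite ltnn.
Qed.

Lemma comp_connected (S : {set T}) x : connected_set e (Defs.comp e S x).
Proof.
set Z := Defs.comp e S x.
have from_x w : w \in Z -> connect (induced e Z) x w.
  rewrite inE => cw.
  suff /andP[] : (w \in Z) && connect (induced e Z) x w by [].
  apply: (connect_prop (P := fun u => (u \in Z) && connect (induced e Z) x u) _ cw).
    move=> a b /andP[aZ cxa] iab.
    have bZ : b \in Z by rewrite inE in aZ; rewrite inE; apply: connect_trans aZ (connect1 iab).
    rewrite bZ; apply: connect_trans cxa (connect1 _).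
    by case/and3P: iab => _ _ eab; rewrite /induced /= aZ bZ.
  by rewrite comp_self connect0.
move=> a b /from_x ca /from_x cb; apply: connect_trans cb.
by rewrite (sym_connect_sym (induced_sym Z)).
Qed.

Section LocalComponents.
Variables (V : {set T}) (z : T).
Local Notation comps := (local_comps e V z).

Lemma comps_partition : partition comps (V :\ z).
Proof.
have -> : comps = equivalence_partition (connect (induced e (V :\ z))) (V :\ z).
  apply: eq_in_imset => x xS; apply/setP => y; rewrite !inE.
  apply/idP/andP => [cxy | [] //]; split=> //.
  by have := subsetP (comp_sub xS) y; rewrite !inE; apply.
apply: equivalence_partitionP => x y w _ _ _; split; first exact: connect0.
move=> cxy; apply/idP/idP; last exact: connect_trans.
by apply: connect_trans; rewrite (sym_connect_sym (induced_sym _)).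
Qed.

Lemma card_comps : #|V :\ z| = \sum_(C in comps) #|C|.
Proof. exact: card_partition comps_partition. Qed.

Lemma comps_sub C : C \in comps -> C \subset V :\ z.
Proof. by case/imsetP => x xS ->; exact: comp_sub. Qed.

Lemma comps_of x : x \in V :\ z -> Defs.comp e (V :\ z) x \in comps.
Proof. exact: imset_f. Qed.

Lemma comps_mem_eq C x : C \in comps -> x \in C -> C = Defs.comp e (V :\ z) x.
Proof. by case/imsetP => y _ -> xC; rewrite (comp_eq xC). Qed.

Lemma comps_pos C : C \in comps -> 0 < #|C|.
Proof. by case/imsetP => x _ ->; apply/card_gt0P; exists x; exact: comp_self. Qed.

Lemma comps_connected C : C \in comps -> connected_set e C.
Proof. by case/imsetP => x _ ->; exact: comp_connected. Qed.

Lemma comps_sep C1 C2 x y : C1 \in comps -> C2 \in comps -> C1 != C2 ->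
  x \in C1 -> y \in C2 -> (x != y) && ~~ e x y.
Proof.
move=> C1c C2c ne xC yC.
rewrite (comps_mem_eq C1c xC) (comps_mem_eq C2c yC) in ne.
apply/andP; split; first by apply: contraNneq ne => ->.
apply: contraNN ne => exy; apply/eqP; symmetry; apply: comp_eq.
have xS := subsetP (comps_sub C1c) x xC; have yS := subsetP (comps_sub C2c) y yC.
by rewrite inE; apply: connect1; rewrite /induced /= xS yS.
Qed.

End LocalComponents.

Lemma comps_nbr z C : connected_set e [set: T] -> C \in local_comps e [set: T] z ->
  exists2 y, y \in C & e z y.
Proof.
move=> Gc /imsetP[x xS ->].
have zC : z \notin Defs.comp e ([set: T] :\ z) x.
  by apply/negP => /(subsetP (comp_sub xS)); rewrite !inE eqxx.
have [a [b [aC]]] := comp_exit Gc (subsetT _) xS (in_setT z) zC.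
rewrite !inE; case: eqP => //= -> _ eaz; exists a => //; by rewrite e_sym.
Qed.

Lemma clique_small (C : {set T}) : #|C| <= 1 -> is_clique e C.
Proof.
move/card_le1P => C1; apply/forallP => x; apply/implyP => xC; apply/forallP => y.
by apply/implyP => yC; have := C1 x xC y; rewrite yC inE => /esym/eqP ->; rewrite eqxx.
Qed.

Lemma connected_small (S : {set T}) : #|S| <= 1 -> connected_set e S.
Proof.
move/card_le1P => S1 x y xS yS.
by have := S1 x xS y; rewrite yS inE => /esym/eqP ->; exact: connect0.
Qed.

Lemma clique_pair (C : {set T}) : connected_set e C -> #|C| = 2 -> is_clique e C.
Proof.
move=> Cc C2; apply/forallP => x; apply/implyP => xC; apply/forallP => y.
apply/implyP => yC; apply/implyP => nxy.
have EC : C = [set x; y].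
  apply/eqP; rewrite eq_sym eqEcard cards2 nxy C2 leqnn andbT.
  by apply/subsetP => w; rewrite !inE => /orP[] /eqP ->.
apply/negPn/negP => nexy.
suff : y == x by rewrite eq_sym (negbTE nxy).
apply: (connect_prop (P := fun w => w == x) _ (Cc x y xC yC) (eqxx x)) => a b /eqP -> /and3P[_].
by rewrite EC !inE => /orP[] /eqP -> //; rewrite (negbTE nexy).
Qed.

End Components.

Lemma RlebP a b : reflect (Rle a b) (Rleb a b).
Proof. by rewrite /Rleb; case: Rle_dec => H; constructor. Qed.

Section Representation.
Variables (T : finType) (e : rel T) (W : {set T}) (l r : T -> R).
Hypothesis e_irr : irreflexive e.
Hypothesis rep : is_rep e W l r.

Lemma rep_le u : u \in W -> Rle (l u) (r u).
Proof. by case: rep => H _; apply: H. Qed.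

Lemma rep_adj x y : x \in W -> y \in W -> x != y ->
  reflect (Rle (l x) (r y) /\ Rle (l y) (r x)) (e x y).
Proof. by move=> xW yW nxy; case: rep => _ /(_ x y xW yW nxy) [H1 H2]; apply: (iffP idP). Qed.

Definition covers (c : T) (t : R) : Prop := Rle (l c) t /\ Rle t (r c).

Lemma point_cover (D : {set T}) a b t : D \subset W -> connected_set e D ->
  a \in D -> Rle (l a) t -> b \in D -> Rle t (r b) ->
  exists2 c, c \in D & covers c t.
Proof.
move=> DW Dc aD lat bD tb.
case: (pickP (fun c => [&& c \in D, Rleb (l c) t & Rleb t (r c)])).
  by move=> c /and3P[cD /RlebP lc /RlebP rc]; exists c.
move=> none; exfalso.
have left_of c : c \in D -> Rle (l c) t -> Rlt (r c) t.
  move=> cD lc; have := none c; rewrite cD; case: RlebP => // _.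
  by case: RlebP => // /Rnot_le_lt.
suff: (b \in D) && ~~ Rleb t (r b) by rewrite bD; move/RlebP: tb => ->.
apply: (connect_prop (P := fun w => (w \in D) && ~~ Rleb t (r w)) _ (Dc a b aD bD)).
  move=> u w /andP[uD /RlebP/Rnot_le_lt ru] /and3P[_ wD euw].
  have uw : u != w by apply: contraTneq euw => ->; rewrite e_irr.
  case/(rep_adj (subsetP DW _ uD) (subsetP DW _ wD) uw): euw => _ lw.
  rewrite wD /=; apply/RlebP => tw.
  by have := left_of w wD (Rle_trans _ _ _ lw (Rlt_le _ _ ru)); lra.
by rewrite aD /=; apply/RlebP => ta; have := left_of a aD lat; lra.
Qed.

Lemma separated_cover (D1 D2 : {set T}) c1 c2 t :
  D1 \subset W -> D2 \subset W ->
  (forall a b, a \in D1 -> b \in D2 -> (a != b) && ~~ e a b) ->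
  c1 \in D1 -> c2 \in D2 -> covers c1 t -> covers c2 t -> False.
Proof.
move=> D1W D2W sep c1D c2D [h1 h1'] [h2 h2'].
have /andP[nc /negP ne] := sep _ _ c1D c2D; apply: ne.
by apply/(rep_adj (subsetP D1W _ c1D) (subsetP D2W _ c2D) nc); lra.
Qed.

Variable z : T.
Hypothesis zW : z \in W.

Definition lbad (u : T) : bool := ~~ Rleb (l z) (l u).
Definition rbad (u : T) : bool := ~~ Rleb (r u) (r z).

Definition sticking_out : {set T} := [set w in W :\ z | lbad w || rbad w].

Lemma imp_at_sticking_out : imp_at W l r z + #|sticking_out| = #|W :\ z|.
Proof.
rewrite /imp_at -(cardsID sticking_out (W :\ z)) addnC; congr (_ + _).
  apply: eq_card => w; rewrite !inE.
  by case: (w == z); case: (w \in W); case: (lbad w || rbad w).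
apply: eq_card => w; rewrite !inE /subint /lbad /rbad.
by case: (w == z); case: (w \in W); case: Rleb; case: Rleb.
Qed.

Lemma nonadjacent_bad w : w \in W -> w != z -> ~~ e z w -> lbad w || rbad w.
Proof.
move=> wW wz nezw; apply/negPn/negP; rewrite negb_or /lbad /rbad !negbK.
case/andP => /RlebP h1 /RlebP h2; move/negP: nezw; apply.
rewrite eq_sym in wz; apply/(rep_adj zW wW wz); have := rep_le wW; lra.
Qed.

Section SideConflict.
Variables (D : {set T}) (y : T).
Hypotheses (DW : D \subset W) (zD : z \notin D) (Dc : connected_set e D).
Hypotheses (yD : y \in D) (ezy : e z y).

Let y_adj : Rle (l z) (r y) /\ Rle (l y) (r z).
Proof.
have zy : z != y by apply: contraNneq zD => ->.
exact/(rep_adj zW (subsetP DW _ yD) zy).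
Qed.

Lemma lbad_cover u : u \in D -> lbad u -> exists2 c, c \in D & covers c (l z).
Proof.
move=> uD /RlebP/Rnot_le_lt lu; case: y_adj => hy _.
exact: (point_cover DW Dc uD (Rlt_le _ _ lu) yD hy).
Qed.

Lemma rbad_cover u : u \in D -> rbad u -> exists2 c, c \in D & covers c (r z).
Proof.
move=> uD /RlebP/Rnot_le_lt ru; case: y_adj => _ hy.
exact: (point_cover DW Dc yD hy uD (Rlt_le _ _ ru)).
Qed.

Lemma one_sided_inside x x' : x \in D -> x' \in D -> x != x' -> ~~ e x x' ->
  e z x -> e z x' ->
  (forall u, u \in D -> ~~ rbad u) \/ (forall u, u \in D -> ~~ lbad u) ->
  exists2 w, w \in D & ~~ lbad w && ~~ rbad w.
Proof.
move=> xD x'D nxx' nexx' ezx ezx' side.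
have xW := subsetP DW _ xD; have x'W := subsetP DW _ x'D.
have zx : z != x by apply: contraNneq zD => ->.
have zx' : z != x' by apply: contraNneq zD => ->.
case/(rep_adj zW xW zx): ezx => hx1 hx2; case/(rep_adj zW x'W zx'): ezx' => hx1' hx2'.
have disjoint : Rlt (r x) (l x') \/ Rlt (r x') (l x).
  case: (Rlt_le_dec (r x) (l x')) => [|c]; first by left.
  case: (Rlt_le_dec (r x') (l x)) => [|c']; first by right.
  by move/negP: nexx'; case; apply/(rep_adj xW x'W nxx').
case: side => H; move: (H x xD) (H x' x'D); rewrite /lbad /rbad !negbK.
  move=> /RlebP rx /RlebP rx'; case: disjoint => c.
    by exists x' => //; rewrite !negbK; apply/andP; split; apply/RlebP; lra.
  by exists x => //; rewrite !negbK; apply/andP; split; apply/RlebP; lra.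
move=> /RlebP lx /RlebP lx'; case: disjoint => c.
  by exists x => //; rewrite !negbK; apply/andP; split; apply/RlebP; lra.
by exists x' => //; rewrite !negbK; apply/andP; split; apply/RlebP; lra.
Qed.

End SideConflict.

End Representation.

Section Weight.
Variables (T : finType) (e : rel T) (z : T).
Hypothesis e_sym : symmetric e.
Local Notation comps := (local_comps e [set: T] z).

Definition exterior_pair (A B : {set T}) : Prop :=
  [/\ A \in comps, B \in comps, A != B &
      forall C, C \in comps -> C != A -> C != B -> ~~ exterior e z C].

(* wt(z) counts n - 2 smallest non-exterior orders, so it is at most the
   total order of the components other than an exterior pair *)
Lemma wt_exterior_pair A B :
  exterior_pair A B -> wt e [set: T] z + #|A| + #|B| <= #|[set: T] :\ z|.
Proof.
case=> Ac Bc AB others; set F := comps :\ A :\ B.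
have FX : F \subset [set C in comps | ~~ exterior e z C].
  by apply/subsetP => C; rewrite !inE => /and3P[CB CA Cc]; rewrite Cc others.
have cF : #|F| = #|comps| - 2.
  have BA : B \in comps :\ A by rewrite !inE eq_sym AB.
  by rewrite /F (cardsD1 A comps) Ac (cardsD1 B (comps :\ A)) BA subn2.
have wtF : wt e [set: T] z <= \sum_(C in F) #|C|.
  by rewrite /wt -cF; exact: sum_smallest_le.
rewrite (card_comps e_sym) (big_setD1 A Ac) (big_setD1 B) ?inE 1?eq_sym ?AB //.
rewrite -/F; move: wtF; set s := \sum_(C in F) _ => h.
rewrite -[X in _ <= X]/(#|A| + (#|B| + s)); lia.
Qed.

End Weight.

Lemma imp_eq_uniq (T : finType) (e : rel T) (W : {set T}) k1 k2 :
  imp_eq e W k1 -> imp_eq e W k2 -> k1 = k2.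
Proof.
case=> [[l1 [r1 [R1 <-]]] H1] [[l2 [r2 [R2 <-]]] H2].
by apply/eqP; rewrite eqn_leq H1 // H2.
Qed.

Lemma nonclique_pair (T : finType) (e : rel T) (C : {set T}) : ~~ is_clique e C ->
  exists x y, [/\ x \in C, y \in C, x != y & ~~ e x y].
Proof.
case/forallPn => x; rewrite negb_imply => /andP[xC /forallPn[y]].
by rewrite !negb_imply => /andP[yC /andP[nxy nexy]]; exists x, y.
Qed.

Lemma nonexterior_adj (T : finType) (e : rel T) z (C : {set T}) :
  ~~ exterior e z C -> forall u, u \in C -> e z u.
Proof. by move=> H u uC; apply: contraNT H => nu; apply/existsP; exists u; rewrite uC. Qed.

Section Deletion.
Variables (T : finType) (e : rel T) (z : T) (Y : {set T}) (v : T).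
Hypotheses (e_sym : symmetric e) (e_irr : irreflexive e).
Hypothesis G_conn : connected_set e [set: T].
Local Notation V := [set: T].
Local Notation comps := (local_comps e V z).
Hypotheses (Yc : Y \in comps) (vY : v \in Y) (Yv_conn : connected_set e (Y :\ v)).
Hypothesis Yv_nbr : exists2 y, y \in Y :\ v & e z y.

(* the connected pieces of G - v - z used below: Y \ v and the other local
   components at z (when Y \ v is connected these are the local components
   of G - v at z) *)
Definition member (D : {set T}) : bool := (D == Y :\ v) || (D \in comps) && (D != Y).

Lemma vz : v != z.
Proof. by have := subsetP (comps_sub Yc) v vY; rewrite !inE andbT. Qed.

Lemma memberP D : member D -> D = Y :\ v \/ D \in comps /\ D != Y.
Proof. by rewrite /member => /orP[/eqP ->|/andP[Dc DY]]; [left|right]. Qed.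

Lemma zW : z \in V :\ v.
Proof. by rewrite !inE eq_sym vz. Qed.

Definition strict_on (N D : {set T}) : Prop :=
  D \in comps -> ~~ exterior e z D -> ~~ is_clique e D -> #|N :&: D| < #|D|.

Lemma member_sub D : member D -> D \subset V :\ v :\ z.
Proof.
rewrite /member => /orP[/eqP ->|/andP[Dc DY]]; apply/subsetP => u.
  case/setD1P => uv uY; have := subsetP (comps_sub Yc) u uY.
  by rewrite !inE uv => /andP[-> _].
move=> uD; have /andP[uv _] := comps_sep e_sym Dc Yc DY uD vY.
by have := subsetP (comps_sub Dc) u uD; rewrite !inE uv => /andP[-> _].
Qed.

Lemma member_notz D : member D -> z \notin D.
Proof. by move/member_sub => S; apply/negP => /(subsetP S); rewrite !inE eqxx. Qed.

Lemma member_subW D : member D -> D \subset V :\ v.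
Proof. by move/member_sub/subset_trans; apply; exact: subsetDl. Qed.

Lemma member_conn D : member D -> connected_set e D.
Proof.
rewrite /member => /orP[/eqP -> // | /andP[Dc _]].
exact: (comps_connected e_sym Dc).
Qed.

Lemma member_nbr D : member D -> exists2 y, y \in D & e z y.
Proof.
rewrite /member => /orP[/eqP -> // | /andP[Dc _]].
exact: (comps_nbr e_sym G_conn Dc).
Qed.

Lemma member_sep D1 D2 : member D1 -> member D2 -> D1 != D2 ->
  forall a b, a \in D1 -> b \in D2 -> (a != b) && ~~ e a b.
Proof.
rewrite /member => /orP[/eqP ->|/andP[D1c D1Y]] /orP[/eqP ->|/andP[D2c D2Y]].
- by rewrite eqxx.
- move=> _ a b /setD1P[_ aY] bD.
  by apply: (comps_sep e_sym Yc D2c) => //; rewrite eq_sym.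
- by move=> _ a b aD /setD1P[_ bY]; exact: (comps_sep e_sym D1c Yc).
- by move=> ne a b; exact: (comps_sep e_sym D1c D2c ne).
Qed.

Definition member_of (u : T) : {set T} :=
  if u \in Y then Y :\ v else Defs.comp e (V :\ z) u.

Lemma member_ofP u : u \in V :\ v :\ z -> member (member_of u) && (u \in member_of u).
Proof.
rewrite /member_of !inE => /and3P[uz uv _]; case: ifP => uY.
  by rewrite /member eqxx !inE uv uY.
have uS : u \in V :\ z by rewrite !inE uz.
rewrite comp_self andbT /member (comps_of e uS) /=; apply/orP; right.
by apply: contraFneq uY => <-; exact: comp_self.
Qed.

Definition deletion_outcome : Prop := exists N : {set T},
  (forall A B, exterior_pair e z A B -> #|A| + #|B| <= #|N|) /\
  exists D1 D2, [/\ member D1, member D2, N \subset D1 :|: D2,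
      forall D, member D -> exterior e z D -> D = D1 \/ D = D2 &
      D1 != D2 -> strict_on N D1 /\ strict_on N D2].

Section DeletedRepresentation.
Variables l r : T -> R.
Hypothesis rep : is_rep e (V :\ v) l r.

(* distinct members cannot stick out of I_z on a common side, since both
   would then cover the same endpoint of I_z *)
Lemma same_side_conflict D1 D2 u1 u2 : member D1 -> member D2 -> D1 != D2 ->
  u1 \in D1 -> u2 \in D2 ->
  (lbad l z u1 && lbad l z u2) || (rbad r z u1 && rbad r z u2) -> False.
Proof.
move=> F1 F2 ne u1D u2D.
have [W1 W2] := (member_subW F1, member_subW F2).
have [y1 y1D ez1] := member_nbr F1; have [y2 y2D ez2] := member_nbr F2.
have sep := member_sep F1 F2 ne.
have cover := separated_cover rep W1 W2 sep.
case/orP => /andP[b1 b2].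
  have [c1 c1D h1] := lbad_cover e_irr rep zW W1 (member_notz F1) (member_conn F1) y1D ez1 u1D b1.
  have [c2 c2D h2] := lbad_cover e_irr rep zW W2 (member_notz F2) (member_conn F2) y2D ez2 u2D b2.
  exact: cover c1D c2D h1 h2.
have [c1 c1D h1] := rbad_cover e_irr rep zW W1 (member_notz F1) (member_conn F1) y1D ez1 u1D b1.
have [c2 c2D h2] := rbad_cover e_irr rep zW W2 (member_notz F2) (member_conn F2) y2D ez2 u2D b2.
exact: cover c1D c2D h1 h2.
Qed.

Lemma confined (bad : pred T) :
  (forall u1 u2, u1 \in V :\ v :\ z -> u2 \in V :\ v :\ z ->
     member_of u1 != member_of u2 -> bad u1 -> bad u2 -> False) ->
  exists2 D, member D & forall u, u \in V :\ v :\ z -> bad u -> u \in D.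
Proof.
move=> Hb; case: (pickP (fun u => (u \in V :\ v :\ z) && bad u)).
  move=> u1 /andP[u1W bu1]; have /andP[F1 _] := member_ofP u1W.
  exists (member_of u1) => // u uW bu; have /andP[_ uF] := member_ofP uW.
  by case: (eqVneq (member_of u1) (member_of u)) => [->//|ne]; case: (Hb _ _ u1W uW ne bu1 bu).
move=> none; exists (Y :\ v); first by rewrite /member eqxx.
by move=> u uW bu; have := none u; rewrite uW bu.
Qed.

Lemma lbad_confined :
  exists2 D, member D & forall u, u \in V :\ v :\ z -> lbad l z u -> u \in D.
Proof.
apply: confined => u1 u2 u1W u2W ne b1 b2.
have /andP[F1 m1] := member_ofP u1W; have /andP[F2 m2] := member_ofP u2W.
by apply: (same_side_conflict F1 F2 ne m1 m2); rewrite b1 b2.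
Qed.

Lemma rbad_confined :
  exists2 D, member D & forall u, u \in V :\ v :\ z -> rbad r z u -> u \in D.
Proof.
apply: confined => u1 u2 u1W u2W ne b1 b2.
have /andP[F1 m1] := member_ofP u1W; have /andP[F2 m2] := member_ofP u2W.
by apply: (same_side_conflict F1 F2 ne m1 m2); rewrite b1 b2 orbT.
Qed.

Lemma one_sided_strict D : member D ->
  (forall u, u \in D -> ~~ rbad r z u) \/ (forall u, u \in D -> ~~ lbad l z u) ->
  strict_on (sticking_out (V :\ v) l r z) D.
Proof.
move=> FD side _ Dne /nonclique_pair[x [x' [xD x'D nxx' nexx']]].
have [w wD /andP[gl gr]] := one_sided_inside rep zW (member_subW FD) (member_notz FD)
  xD x'D nxx' nexx' (nonexterior_adj Dne xD) (nonexterior_adj Dne x'D) side.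
apply: proper_card; apply/properP; split; first exact: subsetIr.
by exists w => //; rewrite !inE (negbTE gl) (negbTE gr) !andbF.
Qed.

End DeletedRepresentation.

Variable p : nat.
Hypotheses (crit : p_critical e V p) (p_wt : p = wt e V z).

(* Deleting v: G - v has impropriety k < p, and in an optimal representation
   the vertices sticking out of I_z form a set N lying in at most two members
   D1, D2, which contain every exterior member; counting then forces every
   exterior pair to have total order at most #|N|. *)
Lemma deletion_bound : deletion_outcome.
Proof.
have Wproper : V :\ v \proper V by rewrite properT; apply/eqP => /setP/(_ v); rewrite !inE eqxx.
case: crit => _ [_ /(_ _ Wproper) [k [kp [[l [r [rep Ek]]] _]]]].
have [D1 F1 HL] := lbad_confined rep; have [D2 F2 HR] := rbad_confined rep.
have sep_in D D' u : member D -> member D' -> u \in D -> u \in D' -> D = D'.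
  move=> F F' uD uD'; apply/eqP; apply: contraT => ne.
  by have := member_sep F F' ne uD uD'; rewrite eqxx.
exists (sticking_out (V :\ v) l r z); split; last first.
  exists D1, D2; split => //.
  - apply/subsetP => u; rewrite !inE => /andP[uW /orP[lb|rb]].
      by rewrite (HL u _ lb) // !inE.
    by rewrite (HR u _ rb) ?orbT // !inE.
  - move=> D FD /existsP[w /andP[wD nw]]; have wW := subsetP (member_sub FD) w wD.
    have [wz wW'] := setD1P wW.
    case/orP: (nonadjacent_bad rep zW wW' wz nw) => [/(HL w wW)|/(HR w wW)] wD'.
      by left; exact: sep_in wD wD'.
    by right; exact: sep_in wD wD'.
  - move=> ne; split; apply: one_sided_strict => //; [left|right] => u uD; apply/negP => b.
      have uW := subsetP (member_sub F1) u uD.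
      by move/eqP: ne; apply; exact: sep_in F1 F2 uD (HR u uW b).
    have uW := subsetP (member_sub F2) u uD.
    by move/eqP: ne; apply; exact: sep_in F1 F2 (HL u uW b) uD.
move=> A B AB; have := wt_exterior_pair e_sym AB.
have := imp_at_sticking_out (V :\ v) l r z.
have : imp_at (V :\ v) l r z <= k by rewrite -Ek; exact: (leq_bigmax_cond _ zW).
have : #|V :\ z| = #|V :\ v :\ z|.+1.
  by rewrite (cardsD1 v (V :\ z)) !inE vz setDDl setUC -setDDl.
move: kp; rewrite p_wt; lia.
Qed.

End Deletion.

Section Critical.
Variables (T : finType) (e : rel T) (z : T) (p : nat).
Hypotheses (e_sym : symmetric e) (e_irr : irreflexive e).
Hypothesis G_conn : connected_set e [set: T].
Hypotheses (crit : p_critical e [set: T] p) (p_wt : p = wt e [set: T] z).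
Local Notation V := [set: T].
Local Notation comps := (local_comps e V z).
Local Notation M := (max_order_comps e V z).
Local Notation mcc := (max_clique_comps e V z).

Lemma three_comps : 3 <= #|comps|.
Proof.
case: crit => p_gt0 _; move: p_gt0; rewrite p_wt /wt ltnNge; apply: contraR.
by rewrite -ltnNge ltnS -subn_eq0 => /eqP ->; rewrite take0.
Qed.

Lemma other_comp Y : exists2 C, C \in comps & C != Y.
Proof.
have : 0 < #|comps :\ Y|.
  by have := three_comps; rewrite (cardsD1 Y comps); case: (Y \in comps) => /=; lia.
by case/card_gt0P => C /setD1P[CY Cc]; exists C.
Qed.

Lemma comps_le_max C : C \in comps -> #|C| <= M.
Proof. exact: (leq_bigmax_cond (F := fun C : {set T} => #|C|)). Qed.

(* a local component Y of maximum order chosen among the maximal clique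
   components when there are any, so that at most k of them differ from Y *)
Lemma max_comp_avoiding k : #|mcc| <= k.+1 ->
  exists Y, [/\ Y \in comps, #|Y| = M & #|mcc :\ Y| <= k].
Proof.
case: (set_0Vmem mcc) => [mcc0 _ | [Y Ym]].
  have : 0 < #|comps| by have := three_comps; case: #|comps|.
  case/(eq_bigmax_cond (fun C : {set T} => #|C|)) => Y Yc YM.
  by exists Y; split => //; rewrite mcc0 set0D cards0.
move: (Ym); rewrite inE => /and3P[Yc _ /eqP YM] mcck; exists Y; split => //.
by move: mcck; rewrite (cardsD1 Y mcc) Ym add1n ltnS.
Qed.

Lemma delete_noncut Y : Y \in comps -> 1 < #|Y| ->
  exists2 v, v \in Y & deletion_outcome e z Y v.
Proof.
move=> Yc Y2; have [y0 y0Y ezy0] := comps_nbr e_sym G_conn Yc.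
have [v /setD1P[vy0 vY] Yv_conn] := noncut e_sym (comps_connected e_sym Yc) y0Y Y2.
exists v => //; apply: (deletion_bound e_sym e_irr G_conn Yc vY Yv_conn _ crit p_wt).
by exists y0; rewrite // !inE eq_sym vy0.
Qed.

Section Closing.
Variables (Y : {set T}) (v : T) (N D1 D2 : {set T}).
Hypothesis vY : v \in Y.
Hypothesis N_pairs : forall A B, exterior_pair e z A B -> #|A| + #|B| <= #|N|.
Hypothesis N_cover : N \subset D1 :|: D2.

Lemma meet_le D : #|N :&: D| <= #|D|.
Proof. exact/subset_leq_card/subsetIr. Qed.

Lemma N_le_sum : #|N| <= #|N :&: D1| + #|N :&: D2|.
Proof.
apply: leq_trans (leq_card_setU _ _); apply: subset_leq_card.
by rewrite -setIUr subsetIidl.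
Qed.

Lemma bounded_Yv : #|N :&: (Y :\ v)| < #|Y|.
Proof. by apply: leq_ltn_trans (meet_le _) _; rewrite (cardsD1 v Y) vY. Qed.

Lemma closing_single (A B : {set T}) :
  D1 = D2 -> #|N :&: D1| <= #|A| -> exterior_pair e z A B -> False.
Proof.
move=> E le AB; have [_ Bc _ _] := AB.
have NA : #|N| <= #|A|.
  by apply: leq_trans le; apply: subset_leq_card; rewrite subsetIidl -(setUid D1) {2}E.
have := N_pairs AB; rewrite leqNgt => /negP; apply.
by rewrite -addn1; exact: leq_add NA (comps_pos Bc).
Qed.

Lemma closing_pair (D D' : {set T}) : #|N| <= #|N :&: D| + #|N :&: D'| ->
  #|N :&: D'| < #|Y| -> exterior_pair e z Y D -> False.
Proof.
move=> le lt YD; have := N_pairs YD; rewrite leqNgt => /negP; apply.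
by apply: leq_ltn_trans le _; rewrite [#|Y| + _]addnC -addnS; exact: leq_add (meet_le D) lt.
Qed.

Definition bounded (D : {set T}) : bool := #|N :&: D| < #|Y|.

Lemma bounded_or_mcc D : D \in comps -> ~~ exterior e z D -> strict_on e z N D ->
  #|Y| = M -> bounded D \/ D \in mcc.
Proof.
move=> Dc Dne strict YM; rewrite /bounded YM.
case: (ltnP #|D| M) => [lt|ge]; first by left; exact: leq_ltn_trans (meet_le D) lt.
have DM : #|D| = M by apply/eqP; rewrite eqn_leq comps_le_max.
case: (boolP (is_clique e D)) => [cl|ncl]; first by right; rewrite inE Dc cl DM eqxx.
by left; rewrite -DM; exact: strict.
Qed.

Lemma member_le_max D : #|Y| = M -> member e z Y v D -> #|N :&: D| <= #|Y|.
Proof.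
move=> YM /memberP[->|[Dc _]]; first exact: ltnW bounded_Yv.
by rewrite YM; exact: leq_trans (meet_le D) (comps_le_max Dc).
Qed.

Lemma closing_two : member e z Y v D1 -> member e z Y v D2 -> D1 != D2 ->
  bounded D1 || bounded D2 ->
  (forall D, D \in comps -> D != Y -> exterior_pair e z Y D) -> False.
Proof.
move=> F1 F2 ne b12 pairs; have sum := N_le_sum; have mus := sum; rewrite addnC in mus.
have bYv : bounded (Y :\ v) by exact: bounded_Yv.
case: (memberP F1) => [E1|[D1c D1Y]].
  case: (memberP F2) => [E2|[D2c D2Y]]; first by rewrite E1 E2 eqxx in ne.
  by rewrite E1 in mus; exact: closing_pair mus bYv (pairs _ D2c D2Y).
case: (memberP F2) => [E2|[D2c D2Y]].
  by rewrite E2 in sum; exact: closing_pair sum bYv (pairs _ D1c D1Y).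
case/orP: b12 => b; first exact: closing_pair mus b (pairs _ D2c D2Y).
exact: closing_pair sum b (pairs _ D1c D1Y).
Qed.

End Closing.

Lemma bounded_or_other_mcc (Y N D : {set T}) v : v \in Y -> #|Y| = M -> member e z Y v D ->
  (D \in comps -> ~~ exterior e z D) -> strict_on e z N D -> bounded Y N D \/ D \in mcc :\ Y.
Proof.
move=> vY YM FD Dne strict; case: (memberP FD) => [->|[Dc DY]]; first by left; exact: bounded_Yv.
case: (bounded_or_mcc Dc (Dne Dc) strict YM) => [|Dm]; [by left|right].
by rewrite in_setD1 DY.
Qed.

Lemma no_exterior_three : (forall C, C \in comps -> ~~ exterior e z C) -> 3 <= #|mcc|.
Proof.
move=> nonext; rewrite leqNgt; apply/negP => mcc2.
have pairs C C' : C \in comps -> C' \in comps -> C != C' -> exterior_pair e z C C'.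
  by move=> Cc C'c ne; split => // D Dc _ _; exact: nonext.
case: (leqP M 1) => [M1|M2].
  suff E : mcc = comps by move: mcc2; rewrite E ltnNge three_comps.
  apply/setP => C; rewrite inE; case Cc: (C \in comps) => //=.
  have le := comps_le_max Cc; have pos := comps_pos Cc.
  by rewrite clique_small ?(leq_trans le M1) //= eqn_leq le (leq_trans M1 pos).
have [Y [Yc YM mccY]] := max_comp_avoiding mcc2.
have Y2 : 1 < #|Y| by rewrite YM.
have [v vY [N [N_pairs [D1 [D2 [F1 F2 cover _ strict]]]]]] := delete_noncut Yc Y2.
case: (eqVneq D1 D2) => [E|ne].
  have [B Bc BY] := other_comp Y.
  apply: (closing_single N_pairs cover E (member_le_max N vY YM F1) (pairs _ _ Yc Bc _)); by rewrite eq_sym.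
have [S1 S2] := strict ne.
apply: (closing_two vY N_pairs cover F1 F2 ne) => [|D Dc DY]; last by apply: pairs; rewrite // eq_sym.
case: (bounded_or_other_mcc vY YM F1 (nonext D1) S1) => [->//|m1].
case: (bounded_or_other_mcc vY YM F2 (nonext D2) S2) => [->|m2]; first by rewrite orbT.
by move: mccY; rewrite leqNgt; case/negP; apply/card_gt1P; exists D1, D2.
Qed.

Section OneExterior.
Variable X : {set T}.
Hypotheses (Xc : X \in comps) (Xext : exterior e z X).
Hypothesis others_nonext : forall C, C \in comps -> C != X -> ~~ exterior e z C.

Lemma pair_with_X C : C \in comps -> C != X -> exterior_pair e z X C /\ exterior_pair e z C X.
Proof.
move=> Cc CX; split; split => //; rewrite 1?eq_sym // => D Dc DX DC;
  exact: others_nonext.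
Qed.

Lemma exterior_deletable : 3 <= #|X| -> exists2 v, v \in X &
  [/\ connected_set e (X :\ v), exists2 y, y \in X :\ v & e z y & exterior e z (X :\ v)].
Proof.
move=> X3; have X2 : 1 < #|X| by apply: leq_trans X3.
have Xconn := comps_connected e_sym Xc; have [y yX ezy] := comps_nbr e_sym G_conn Xc.
have [v1 /setD1P[v1y v1X] conn1] := noncut e_sym Xconn yX X2.
have [ext1|] := boolP (exterior e z (X :\ v1)).
  by exists v1 => //; split => //; exists y; rewrite // !inE eq_sym v1y.
(* otherwise v1 is the only non-neighbour of z in X; delete another vertex *)
move=> next1; have all1 := nonexterior_adj next1.
have nv1 : ~~ e z v1.
  case/existsP: Xext => w /andP[wX nw]; apply: contraNN nw => ev1.
  by case: (eqVneq w v1) => [-> //|wv1]; apply: all1; rewrite !inE wv1.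
have [v2 /setD1P[v2v1 v2X] conn2] := noncut e_sym Xconn v1X X2.
have : 0 < #|X :\ v1 :\ v2|.
  by move: X3; rewrite (cardsD1 v1 X) v1X (cardsD1 v2 (X :\ v1)) !inE v2v1 v2X.
case/card_gt0P => x; rewrite !inE => /and3P[xv2 xv1 xX].
exists v2 => //; split => //.
  by exists x; [rewrite !inE xv2 xX | apply: all1; rewrite !inE xv1 xX].
by apply/existsP; exists v1; rewrite !inE eq_sym v2v1 v1X.
Qed.

Lemma one_exterior_large : 3 <= #|X| -> False.
Proof.
case/exterior_deletable => v vX [conn [y yXv ezy] ext].
have [N [N_pairs [D1 [D2 [F1 F2 cover exts strict]]]]] :=
  deletion_bound e_sym e_irr G_conn Xc vX conn (ex_intro2 _ _ y yXv ezy) crit p_wt.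
have FXv : member e z X v (X :\ v) by rewrite /member eqxx.
have bXv := bounded_Yv N vX.
case: (eqVneq D1 D2) => [E|ne].
  have [B Bc BX] := other_comp X; have [XB _] := pair_with_X Bc BX.
  have D1Xv : D1 = X :\ v by case: (exts _ FXv ext) => ->.
  by apply: (closing_single N_pairs cover E _ XB); rewrite D1Xv ltnW.
apply: (closing_two vX N_pairs cover F1 F2 ne) => [|D Dc DX]; last by case: (pair_with_X Dc DX).
by case: (exts _ FXv ext) => <-; rewrite /bounded bXv ?orbT.
Qed.

Lemma exterior_witness : exists2 w, w \in X & ~~ e z w.
Proof. by case/existsP: Xext => w /andP[]; exists w. Qed.

(* case |X| = 2 with all other components singletons: delete the
   non-neighbour of z in X *)
Lemma one_exterior_small_rest :
  #|X| = 2 -> (forall C, C \in comps -> C != X -> #|C| <= 1) -> False.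
Proof.
move=> X2 small; have [w wX nw] := exterior_witness.
have [y yX ezy] := comps_nbr e_sym G_conn Xc.
have yXw : y \in X :\ w by rewrite !inE yX andbT; apply: contraNneq nw => <-.
have Xw1 : #|X :\ w| <= 1 by move: X2; rewrite (cardsD1 w X) wX add1n => -[->].
have [N [N_pairs [D1 [D2 [F1 F2 cover _ _]]]]] := deletion_bound e_sym e_irr G_conn Xc wX
  (connected_small e Xw1) (ex_intro2 _ _ y yXw ezy) crit p_wt.
have le1 D : member e z X w D -> #|N :&: D| <= 1.
  move=> /memberP[->|[Dc DX]]; apply: leq_trans (meet_le N _) _ => //; exact: small.
have [B Bc BX] := other_comp X; have [XB _] := pair_with_X Bc BX.
have := N_pairs _ _ XB; rewrite leqNgt => /negP; apply.
apply: leq_ltn_trans (N_le_sum cover) _; rewrite X2 -addn1 addnC.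
rewrite addnC; exact: leq_add (leq_add (le1 _ F1) (le1 _ F2)) (comps_pos Bc).
Qed.

(* case |X| = 2 and M >= 3, with Y of order M the only possible maximal
   clique component: delete a non-cut vertex of Y *)
Lemma one_exterior_small_max Y : #|X| = 2 -> Y \in comps -> #|Y| = M -> 3 <= M ->
  #|mcc :\ Y| <= 0 -> False.
Proof.
move=> X2 Yc YM M3 mcc0.
have YX : Y != X by apply: contraTneq M3 => EY; rewrite -YM EY X2.
have Y2 : 1 < #|Y| by rewrite YM; apply: leq_trans M3.
have [v vY [N [N_pairs [D1 [D2 [F1 F2 cover exts strict]]]]]] := delete_noncut Yc Y2.
have FX : member e z Y v X by rewrite /member Xc (eq_sym X Y) YX orbT.
have [_ YXp] := pair_with_X Yc YX.
(* every member other than X is bounded, since Y is the only candidate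
   maximal clique component *)
have bounded_other D : member e z Y v D -> D != X -> strict_on e z N D -> bounded Y N D.
  move=> FD DX SD; have nonext Dc := others_nonext Dc DX.
  case: (bounded_or_other_mcc vY YM FD nonext SD) => // Dm.
  by move: mcc0; rewrite leqNgt; case/negP; apply/card_gt0P; exists D.
case: (eqVneq D1 D2) => [E|ne].
  exact: (closing_single N_pairs cover E (member_le_max N vY YM F1) YXp).
have [S1 S2] := strict ne; have sum := N_le_sum cover.
case: (exts _ FX Xext) => EX.
  apply: (closing_pair N_pairs (D := X) (D' := D2)) YXp; first by rewrite EX.
  by apply: bounded_other; rewrite // EX eq_sym.
rewrite addnC in sum; apply: (closing_pair N_pairs (D := X) (D' := D1)) YXp; first by rewrite EX.
by apply: bounded_other; rewrite // EX.
Qed.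

Lemma one_exterior_two : 2 <= #|mcc|.
Proof.
rewrite leqNgt ltnS; apply/negP => mcc1.
have [w wX nw] := exterior_witness; have [y yX ezy] := comps_nbr e_sym G_conn Xc.
have X_gt1 : 1 < #|X| by apply/card_gt1P; exists y, w; split => //; apply: contraNneq nw => <-.
case: (ltnP 2 #|X|) => [|X_le2]; first exact: one_exterior_large.
have X2 : #|X| = 2 by apply/eqP; rewrite eqn_leq X_le2 X_gt1.
have [small|] := boolP [forall C in comps :\ X, #|C| <= 1].
  apply: one_exterior_small_rest => // C Cc CX.
  by move/forall_inP: small; apply; rewrite !inE CX.
case/forall_inPn => C0; rewrite !inE -ltnNge => /andP[C0X C0c] C0_2.
case: (leqP M 2) => [M2|M3].
  (* X and C0 are then both maximal clique components *)
  have mcc2 C : C \in comps -> 2 <= #|C| -> C \in mcc.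
    move=> Cc C2; have CM : #|C| = M by apply/eqP; rewrite eqn_leq comps_le_max ?(leq_trans M2).
    have C_eq2 : #|C| = 2 by apply/eqP; rewrite eqn_leq C2 CM M2.
    by rewrite inE Cc (clique_pair (comps_connected e_sym Cc) C_eq2) CM eqxx.
  move: mcc1; rewrite leqNgt => /negP; apply; apply/card_gt1P; exists X, C0.
  by split; [apply: mcc2; rewrite ?X2 | apply: mcc2 | rewrite eq_sym].
have [Y [Yc YM mccY]] := max_comp_avoiding mcc1.
exact: one_exterior_small_max X2 Yc YM M3 mccY.
Qed.

End OneExterior.

End Critical.

Section ExteriorCount.
Variables (T : finType) (e : rel T) (z : T).
Local Notation comps := (local_comps e [set: T] z).

Lemma exterior_comps0 : #|exterior_comps e [set: T] z| = 0 ->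
  forall C, C \in comps -> ~~ exterior e z C.
Proof.
move/eqP; rewrite cards_eq0 => /eqP E C Cc; apply/negP => ext.
by have := in_set0 C; rewrite -E inE Cc ext.
Qed.

Lemma exterior_comps1 : #|exterior_comps e [set: T] z| = 1 ->
  exists X, [/\ X \in comps, exterior e z X &
                forall C, C \in comps -> C != X -> ~~ exterior e z C].
Proof.
move/eqP/cards1P => [X E]; have := set11 X; rewrite -E inE => /andP[Xc Xext].
exists X; split=> // C Cc CX; apply: contraNN CX => ext.
by rewrite -in_set1 -E inE Cc ext.
Qed.

End ExteriorCount.

Theorem theorem3p3 (T : finType) (e : rel T) (p : nat) (z : T) :
  simple_graph e ->
  connected_set e [set: T] ->
  interval_graph e [set: T] ->
  balanced e [set: T] ->
  p_critical e [set: T] p ->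
  basepoint e [set: T] z ->
  (#|exterior_comps e [set: T] z| <= 1 -> 2 <= #|max_clique_comps e [set: T] z|) /\
  (#|exterior_comps e [set: T] z| = 0 -> 3 <= #|max_clique_comps e [set: T] z|).
Proof.
move=> [e_sym e_irr] G_conn _ _ crit [_ [_ imp_wt]].
have p_wt : p = wt e [set: T] z by case: crit => _ [imp_p _]; exact: imp_eq_uniq imp_p imp_wt.
have part_b : #|exterior_comps e [set: T] z| = 0 -> 3 <= #|max_clique_comps e [set: T] z|.
  by move/exterior_comps0; exact: no_exterior_three e_sym e_irr G_conn crit p_wt.
split=> // ext_le1; case: (posnP #|exterior_comps e [set: T] z|) => [/part_b/ltnW //|ext_gt0].
have ext1 : #|exterior_comps e [set: T] z| = 1 by apply/eqP; rewrite eqn_leq ext_le1.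
have [X [Xc Xext others]] := exterior_comps1 ext1.
exact: (one_exterior_two e_sym e_irr G_conn crit p_wt Xc Xext others).
Qed.
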